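(* Let $g_{GB}$ and $g_{GF}$ be independent random variables, where $g_{GB}=|h_{GB}|^2d_{GB}^{-\alpha}$ with $d_{GB}$ the distance to the origin of a point uniform in the disc $|z|\le R_1$, and $g_{GF}=|h_{GF}|^2d_{GF}^{-\alpha}$ with $d_{GF}$ the distance to the origin of a point uniform in the annulus $R_1\le|z|\le R_2$, the fading powers $|h_{GB}|^2,|h_{GF}|^2$ being exponential (means $\lambda_{GB},\lambda_{GF}$) and independent of the distances. Let $P_{GB},P_{GF},\sigma^2>0$, $\rho_{GB}=P_{GB}/\sigma^2$, $\rho_{GF}=P_{GF}/\sigma^2$, $\gamma_{th}^{GB}>0$, and define $$P^{GB,I}_{out,p_2}=\Pr\left\{\frac{\rho_{GB}g_{GB}}{\rho_{GF}g_{GF}+1}<\gamma_{th}^{GB},\ g_{GF}<\frac{P_{GB}}{P_{GF}}g_{GB}\right\}.$$ Let $F^{near}_{g_{GB}}$ be the CDF of $g_{GB}$ and $f^{far}_{g_{GF}}$ the density of $g_{GF}$. Then: (a) if $\gamma_{th}^{GB}>1$, $$P^{GB,I}_{out,p_2}=\int_0^\infty F^{near}_{g_{GB}}\!\left(\frac{\gamma_{th}^{GB}\rho_{GF}x+\gamma_{th}^{GB}}{\rho_{GB}}\right)f^{far}_{g_{GF}}(x)\,dx-\int_0^\infty F^{near}_{g_{GB}}\!\left(\frac{\rho_{GF}}{\rho_{GB}}x\right)f^{far}_{g_{GF}}(x)\,dx;$$ (b) if $\gamma_{th}^{GB}\le1$, then with $\sigma_1=\frac{\gamma_{th}^{GB}}{\rho_{GF}(1-\gamma_{th}^{GB})}$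 (interpreted as $\sigma_1=+\infty$ when $\gamma_{th}^{GB}=1$), $$P^{GB,I}_{out,p_2}=\int_0^{\sigma_1} F^{near}_{g_{GB}}\!\left(\frac{\gamma_{th}^{GB}\rho_{GF}x+\gamma_{th}^{GB}}{\rho_{GB}}\right)f^{far}_{g_{GF}}(x)\,dx-\int_0^{\sigma_1} F^{near}_{g_{GB}}\!\left(\frac{\rho_{GF}}{\rho_{GB}}x\right)f^{far}_{g_{GF}}(x)\,dx.$$
   Context: Setting (''Scenario I'', dynamic protocol) of an uplink semi-grant-free NOMA pair: a grant-based (GB) user is the near user in a disc of radius $R_1$ around the base station at the origin and a grant-free (GF) user is the far user in the annulus between radii $R_1<R_2$; $\alpha>0$ is the path loss exponent, $\sigma^2$ the noise power, $P_{GB},P_{GF}$ transmit powers. The GF user is admitted only if $P_{GF}g_{GF}<P_{GB}g_{GB}$, and $P^{GB,I}_{out,p_2}$ is the outage probability of the GB user with target SINR $\gamma_{th}^{GB}$. *)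

From HB Require Import structures.
From mathcomp Require Import all_boot all_order all_algebra.
From mathcomp Require Import all_classical all_reals all_analysis.
Set Implicit Arguments. Unset Strict Implicit. Unset Printing Implicit Defensive.
Import Order.TTheory GRing.Theory Num.Def Num.Theory.
Local Open Scope classical_set_scope.
Local Open Scope ring_scope.

Definition indep2 d (T : measurableType d) (R : realType) (P : probability T R)
  d1 d2 (T1 : measurableType d1) (T2 : measurableType d2)
  (X : T -> T1) (Y : T -> T2) : Prop :=
  forall A B, measurable A -> measurable B ->
    P (X @^-1` A `&` Y @^-1` B) = (P (X @^-1` A) * P (Y @^-1` B))%E.

Definition leb2 (R : realType) :=
  ((@lebesgue_measure R) \x (@lebesgue_measure R))%E.

Definition sqnorm2 (R : realType) (z : R * R) : R := z.1 ^+ 2 + z.2 ^+ 2.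

Definition dist0 (R : realType) (z : R * R) : R := Num.sqrt (sqnorm2 z).

Definition disc (R : realType) (r : R) : set (R * R) :=
  [set z | sqnorm2 z <= r ^+ 2].
Definition annulus (R : realType) (r1 r2 : R) : set (R * R) :=
  [set z | r1 ^+ 2 <= sqnorm2 z <= r2 ^+ 2].

Definition uniform_on d (T : measurableType d) (R : realType)
  (P : probability T R) (Z : T -> R * R) (D : set (R * R)) (area : R) : Prop :=
  forall A, measurable A -> P (Z @^-1` A) = (@leb2 R (A `&` D) * (area^-1)%:E)%E.

(* H is exponentially distributed with mean lam (rate lam^-1) *)
Definition exp_mean d (T : measurableType d) (R : realType)
  (P : probability T R) (H : T -> R) (lam : R) : Prop :=
  forall A, measurable A -> P (H @^-1` A) = exponential_prob (lam^-1) A.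

Definition cdfR d (T : measurableType d) (R : realType)
  (P : probability T R) (X : T -> R) (y : R) : R :=
  fine (P [set w | X w <= y]).

Definition is_density d (T : measurableType d) (R : realType)
  (P : probability T R) (X : T -> R) (f : R -> R) : Prop :=
  (forall x, 0 <= f x) /\ measurable_fun [set: R] f /\
  forall A, measurable A ->
    P (X @^-1` A) = (\int[lebesgue_measure]_(x in A) (f x)%:E)%E.

Definition gain (R : realType) (alpha h dist : R) : R := h * dist `^ (- alpha).

Definition dom_b (R : realType) (gam rhoGF : R) : set R :=
  if gam == 1 then `[0, +oo[%classic
  else `[0, gam / (rhoGF * (1 - gam))[%classic.

From HB Require Import structures.
From mathcomp Require Import all_boot all_order all_algebra.
From mathcomp Require Import all_classical all_reals all_analysis.
From mathcomp Require Import measurable_realfun.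
From mathcomp Require Import ring lra.
Set Implicit Arguments. Unset Strict Implicit. Unset Printing Implicit Defensive.
Import Order.TTheory GRing.Theory Num.Def Num.Theory.
Local Open Scope classical_set_scope.
Local Open Scope ring_scope.

(* Where gGF >= 0, the outage event says exactly that gGB lies strictly between
   the lines l x = rhoGF x / rhoGB and u x = (gam rhoGF x + gam) / rhoGB at
   x = gGF; the band is nonempty iff l x < u x, which carves out the integration
   domain ([0, +oo[ when gam > 1, [0, sigma1[ otherwise).  By independence the
   law of (gGF, gGB) is the product of the marginals, so by Fubini and the
   density of gGF the band has probability the integral of
   (Fnear (u x) - Fnear (l x)) fGF x; the boundary gGB = u gGF is null because
   gGF has a density.  Only gGF >= 0 a.s. is used of the fading law, and nothing
   of the distance laws. *)

Lemma measurable_inv (R : realType) : measurable_fun [set: R] (@GRing.inv R).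
Proof.
rewrite -(setUv [set 0]); apply/measurable_funU => //; first exact: measurableC.
split; first exact: measurable_fun_set1.
apply: open_continuous_measurable_fun; last first.
  by move=> x; rewrite inE /= => /eqP x0; exact: inv_continuous.
by apply: closed_openC; apply: accessible_closed_set1; exact: hausdorff_accessible.
Qed.

Section measurable_comparison.
Context d (T : measurableType d) (R : realType) (f g : T -> R).
Hypotheses (mf : measurable_fun [set: T] f) (mg : measurable_fun [set: T] g).

Lemma measurable_ltr_set : measurable [set x | f x < g x].
Proof.
rewrite -(setTI [set x | _]).
change (measurable ([set: T] `&` (fun x => f x < g x) @^-1` [set true])).
exact: (measurable_fun_ltr mf mg).
Qed.

Lemma measurable_ler_set : measurable [set x | f x <= g x].
Proof.
rewrite -(setTI [set x | _]).
change (measurable ([set: T] `&` (fun x => f x <= g x) @^-1` [set true])).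
exact: (measurable_fun_ler mf mg).
Qed.

Lemma measurable_eqr_set : measurable [set x | f x = g x].
Proof.
rewrite (_ : [set x | _] = [set: T] `&` (fun x => f x == g x) @^-1` [set true]).
  by apply: (measurable_fun_eqr mf mg).
by rewrite setTI; apply/seteqP; split => x /= /eqP.
Qed.

End measurable_comparison.

Lemma eq_measure_setU_null d (T : measurableType d) (R : realType)
    (mu : {measure set T -> \bar R}) (A B N : set T) :
  measurable A -> measurable B -> measurable N -> mu N = 0%E ->
  A `|` N = B `|` N -> mu A = mu B.
Proof. by move=> mA mB mN N0 ABN; rewrite -(measureU0 mA mN N0) ABN measureU0. Qed.

Definition mfun_of d d' (T : measurableType d) (T' : measurableType d')
    (g : T -> T') (mg : measurable_fun [set: T] g) : {mfun T >-> T'} :=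
  mfun_Sub (mem_set mg : g \in mfun).

Section outage_algebra.
Variables (R : realFieldType) (rB rF gam : R).
Hypotheses (rB_gt0 : 0 < rB) (rF_gt0 : 0 < rF).

Definition outage_domain : set R := [set x | 0 <= x /\ rF * x < gam * rF * x + gam].

Lemma outage_bounds_lt x :
  (rF / rB * x < (gam * rF * x + gam) / rB) = (rF * x < gam * rF * x + gam).
Proof. by rewrite mulrAC ltr_pM2r ?invr_gt0. Qed.

Lemma outage_event_iff x y : 0 <= x ->
  (rB * y / (rF * x + 1) < gam /\ x < rB / rF * y) <->
  (rF / rB * x < y /\ y < (gam * rF * x + gam) / rB).
Proof.
move=> x_ge0; have den_gt0 : 0 < rF * x + 1 by rewrite ltr_wpDl // mulr_ge0 // ltW.
rewrite ltr_pdivrMr // (mulrAC rB) ltr_pdivlMr // (mulrAC rF) ltr_pdivrMr //.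
rewrite ltr_pdivlMr //.
by split => -[? ?]; split; lra.
Qed.

End outage_algebra.

Lemma outage_domain_gt1 (R : realType) (rF gam : R) : 0 < rF -> 1 < gam ->
  outage_domain rF gam = `[0, +oo[%classic.
Proof.
move=> rF_gt0 gam_gt1; apply/seteqP; split => x /=; rewrite in_itv /= andbT.
  by case.
move=> x_ge0; split => //; have := mulr_ge0 (ltW rF_gt0) x_ge0; nra.
Qed.

Lemma outage_domain_le1 (R : realType) (rF gam : R) : 0 < rF -> 0 < gam -> gam <= 1 ->
  outage_domain rF gam = dom_b gam rF.
Proof.
move=> rF_gt0 gam_gt0 gam_le1; rewrite /dom_b; case: eqP => [->|gam_neq1].
  apply/seteqP; split => x /=; rewrite in_itv /= andbT; first by case.
  by move=> x_ge0; split => //; lra.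
have k_gt0 : 0 < rF * (1 - gam).
  by rewrite mulr_gt0 // subr_gt0 lt_neqAle gam_le1 andbT; exact/eqP.
apply/seteqP; split => x /=; rewrite in_itv /= ltr_pdivlMr //.
  by case=> x_ge0 ?; apply/andP; split => //; lra.
by case/andP => x_ge0 ?; split => //; lra.
Qed.

Section independent_pair.
Context d (T : measurableType d) (R : realType) (P : probability T R).
Variables (X Y : T -> R) (f : R -> R).
Hypotheses (mX : measurable_fun [set: T] X) (mY : measurable_fun [set: T] Y).
Hypotheses (indepYX : indep2 P Y X) (densX : is_density P X f).

Let lawX := distribution P (@mfun_of _ _ _ (measurableTypeR R) _ mX).
Let lawY := distribution P (@mfun_of _ _ _ (measurableTypeR R) _ mY).

Lemma prob_pair_product S : measurable S ->
  P [set w | S (X w, Y w)] = (lawX \x lawY)%E S.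
Proof.
move=> mS; rewrite (@product_measure_unique _ _ _ _ _ lawX lawY
  (distribution P (mfun_of (@measurable_fun_pair _ _ _ _
    (measurableTypeR R) (measurableTypeR R) _ _ mX mY)))) // => A B mA mB.
rewrite [RHS]muleC -indepYX //.
by congr (P _); apply/seteqP; split => w /= [].
Qed.

Lemma lawX_dominated : lawX `<< (@lebesgue_measure R).
Proof.
apply/null_content_dominatesP => A mA A0.
have [_ [mf fE]] := densX.
transitivity (P (X @^-1` A)); first by [].
rewrite fE //; apply: null_set_integral => //.
by apply/measurable_EFinP; exact: measurable_funS mf.
Qed.

Lemma integral_lawX E (g : R -> \bar R) : measurable E ->
  (forall x, 0 <= g x)%E -> measurable_fun E g ->
  (\int[lawX]_(x in E) g x = \int[lebesgue_measure]_(x in E) (g x * (f x)%:E))%E.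
Proof.
move=> mE g0 mg; have [_ [mf fE]] := densX.
have mfE : measurable_fun E (EFin \o f).
  by apply/measurable_EFinP; exact: measurable_funS mf.
have dlawX := @Radon_Nikodym_SigmaFinite.f_integrable _ _ _ lawX lebesgue_measure
  lawX_dominated.
rewrite -(@Radon_Nikodym_SigmaFinite.change_of_variables _ _ _ lawX lebesgue_measure
  lawX_dominated _ _ g0 mE mg).
apply: ae_eq_integral => //.
- apply: emeasurable_funM => //; apply: measurable_funTS.
  exact: measurable_int dlawX.
- exact: emeasurable_funM.
apply: ae_eqe_mul2l; apply: integral_ae_eq => //.
- exact: integrableS dlawX.
move=> A AE mA; rewrite -Radon_Nikodym_SigmaFinite.f_integral //.
  exact: fE.
exact: lawX_dominated.
Qed.

Lemma prob_le_curve D (phi : R -> R) : measurable D ->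
  measurable_fun [set: R] phi ->
  P [set w | D (X w) /\ Y w <= phi (X w)] =
  (\int[lebesgue_measure]_(x in D) (cdfR P Y (phi x) * f x)%:E)%E.
Proof.
move=> mD mphi.
pose S := [set p : R * R | D p.1 /\ p.2 <= phi p.1].
have mS : measurable S.
  apply: measurableI; first by rewrite -[X in measurable X]setTI; exact: measurable_fst.
  apply: measurable_ler_set; first exact: measurable_snd.
  exact: measurableT_comp mphi measurable_fst.
rewrite (_ : [set w | _] = [set w | S (X w, Y w)]) // prob_pair_product //.
transitivity (\int[lawX]_x (lawY \o xsection S) x)%E; first by [].
rewrite integral_lawX //; last exact: measurable_fun_xsection.
rewrite [RHS]integral_mkcond; apply: eq_integral => x _; rewrite patchE /=.
case: ifPn => xD.
- have -> : xsection S x = [set y | y <= phi x].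
    apply/seteqP; split => y; rewrite /xsection /= inE; first by case.
    by split => //; exact: set_mem.
  rewrite EFinM /cdfR fineK //; apply: fin_num_measure.
  by apply: measurable_ler_set => //; exact: measurable_cst.
- have -> : xsection S x = set0.
    apply/seteqP; split => y //; rewrite /xsection /= inE => -[/mem_set].
    by rewrite (negbTE xD).
  by rewrite (_ : lawY set0 = 0%E) ?mul0e //; exact: measure0.
Qed.

Lemma prob_eq_affine (a b : R) : a != 0 -> P [set w | Y w = a * X w + b] = 0%E.
Proof.
move=> a0; pose S := [set p : R * R | p.2 = a * p.1 + b].
have mS : measurable S.
  apply: measurable_eqr_set; first exact: measurable_snd.
  by apply: measurable_funD => //; apply: measurable_funM => //; exact: measurable_fst.
rewrite (_ : [set w | _] = [set w | S (X w, Y w)]) // prob_pair_product //.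
rewrite (@product_measure_unique _ _ _ _ _ lawX lawY (lawX \x^ lawY)%E) //; last first.
  by move=> A B mA mB; exact: product_measure2E.
(* Integrate over y first: each section of the line is a point, null for lawX. *)
transitivity (\int[lawY]_y (lawX \o ysection S) y)%E; first by [].
rewrite (_ : lawX \o ysection S = fun=> 0%E) ?integral0 //; apply: funext => y /=.
have -> : ysection S y = [set (y - b) / a].
  apply/seteqP; split => x; rewrite /ysection /S /= inE /= => ->.
    by rewrite addrK mulrC mulKf.
  by rewrite mulrC divfK // subrK.
have [_ [_ fE]] := densX.
transitivity (P (X @^-1` [set (y - b) / a])); first by [].
by rewrite fE ?integral_set1 //; exact: measurable_set1.
Qed.

Lemma prob_between_curves D (l u : R -> R) : measurable D ->
  measurable_fun [set: R] l -> measurable_fun [set: R] u ->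
  (forall x, D x -> l x <= u x) -> P [set w | Y w = u (X w)] = 0%E ->
  P [set w | D (X w) /\ l (X w) < Y w /\ Y w < u (X w)] =
  (\int[lebesgue_measure]_(x in D) (cdfR P Y (u x) * f x)%:E
   - \int[lebesgue_measure]_(x in D) (cdfR P Y (l x) * f x)%:E)%E.
Proof.
move=> mD ml mu le_lu Yu0.
have mDX : measurable [set w | D (X w)].
  by rewrite -[X in measurable X]setTI; exact: mX.
have mlX : measurable_fun [set: T] (l \o X) by exact: measurableT_comp.
have muX : measurable_fun [set: T] (u \o X) by exact: measurableT_comp.
set Eu := [set w | D (X w) /\ Y w <= u (X w)].
set El := [set w | D (X w) /\ Y w <= l (X w)].
set Elu := [set w | D (X w) /\ l (X w) < Y w /\ Y w <= u (X w)].
have mEl : measurable El by apply: measurableI => //; exact: measurable_ler_set.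
have mElu : measurable Elu.
  apply: measurableI => //; apply: measurableI; first exact: measurable_ltr_set.
  exact: measurable_ler_set.
rewrite (eq_measure_setU_null _ mElu (measurable_eqr_set mY muX) Yu0).
- rewrite -!prob_le_curve // (_ : [set w | _] = El `|` Elu).
    rewrite measureU //; last first.
      apply/seteqP; split => w // [[_ Yl] [_ [lY _]]].
      by have := le_lt_trans Yl lY; rewrite ltxx.
    by rewrite addeAC subee ?add0e // fin_num_measure.
  apply/seteqP; split => w /=.
  + by case=> Dx Yu; have [Yl|lY] := leP (Y w) (l (X w)); [left | right].
  + by case=> [[Dx Yl]|[Dx [_ Yu]]]; split => //; exact: le_trans Yl (le_lu _ Dx).
- apply: measurableI => //; apply: measurableI; first exact: measurable_ltr_set.
  exact: measurable_ltr_set.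
- apply/seteqP; split => w /=.
  + by case=> [[Dx [lY Yu]]|Yu]; [left; do !split => //; exact: ltW | right].
  + case=> [[Dx [lY]]|Yu]; last by right.
    by rewrite le_eqVlt => /predU1P[|Yu]; [right | left].
Qed.

Variables (rB rF gam : R).
Hypotheses (rB_gt0 : 0 < rB) (rF_gt0 : 0 < rF) (gam_gt0 : 0 < gam).
Hypothesis X_lt0_null : P [set w | X w < 0] = 0%E.

Lemma prob_outage :
  P [set w | rB * Y w / (rF * X w + 1) < gam /\ X w < rB / rF * Y w] =
  (\int[lebesgue_measure]_(x in outage_domain rF gam)
      (cdfR P Y ((gam * rF * x + gam) / rB) * f x)%:E
   - \int[lebesgue_measure]_(x in outage_domain rF gam)
      (cdfR P Y (rF / rB * x) * f x)%:E)%E.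
Proof.
pose l x := rF / rB * x; pose u x := (gam * rF * x + gam) / rB.
have ml : measurable_fun [set: R] l by exact: measurable_funM.
have mu : measurable_fun [set: R] u.
  by apply: measurable_funM => //; apply: measurable_funD => //; exact: measurable_funM.
have mD : measurable (outage_domain rF gam).
  apply: measurableI; first exact: measurable_ler_set.
  apply: measurable_ltr_set; first exact: measurable_funM.
  by apply: measurable_funD => //; exact: measurable_funM.
have mXlt0 : measurable [set w | X w < 0] by exact: measurable_ltr_set.
rewrite (eq_measure_setU_null (B := [set w |
    outage_domain rF gam (X w) /\ l (X w) < Y w /\ Y w < u (X w)]) _ _ mXlt0 X_lt0_null).
- apply: prob_between_curves => // [x [_]|].
    by rewrite -(outage_bounds_lt _ _ rB_gt0) => /ltW.
  rewrite -(@prob_eq_affine (gam * rF / rB) (gam / rB)).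
    by congr (P _); apply/seteqP; split => w; rewrite /= /u mulrDl mulrAC.
  by rewrite !mulf_neq0 ?invr_eq0 ?gt_eqF.
- apply: measurableI.
    apply: (measurable_ltr_set (f := fun w => rB * Y w / (rF * X w + 1))
      (g := cst gam)) => //.
    apply: measurable_funM; first exact: measurable_funM.
    apply: measurableT_comp; first exact: measurable_inv.
    by apply: measurable_funD => //; exact: measurable_funM.
  by apply: measurable_ltr_set => //; exact: measurable_funM.
- apply: measurableI; first by rewrite -[X in measurable X]setTI; exact: mX.
  apply: measurableI; apply: measurable_ltr_set => //; exact: measurableT_comp.
apply/seteqP; split => w /=.
- case=> [[ev1 ev2]|]; last by right.
  have [X_neg|X_ge0] := ltP (X w) 0; [by right | left].
  have [lY Yu] := (outage_event_iff _ rB_gt0 rF_gt0 _ X_ge0).1 (conj ev1 ev2).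
  by do !split => //; rewrite -(outage_bounds_lt _ _ rB_gt0); exact: lt_trans lY Yu.
- case=> [[[X_ge0 _] lYu]|]; last by right.
  by left; exact/(outage_event_iff _ rB_gt0 rF_gt0 _ X_ge0).
Qed.

End independent_pair.

Lemma measurable_dist0 (R : realType) : measurable_fun [set: R * R] (@dist0 R).
Proof.
apply: measurableT_comp (continuous_measurable_fun (@sqrt_continuous R)) _.
by apply: measurable_funD; apply: measurableT_comp (exprn_measurable _) _.
Qed.

Section gain.
Context d (T : measurableType d) (R : realType) (P : probability T R).
Variables (alpha lam : R) (h : T -> R) (z : T -> R * R).
Hypotheses (mh : measurable_fun [set: T] h) (mz : measurable_fun [set: T] z).

Let g w := gain alpha (h w) (dist0 (z w)).

Lemma measurable_gain : measurable_fun [set: T] g.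
Proof.
apply: measurable_funM mh _; apply: measurableT_comp (@measurable_powR R _) _.
apply: measurableT_comp; last exact: mz.
exact: measurable_dist0.
Qed.

Lemma exp_mean_prob_lt0 : exp_mean P h lam -> P (h @^-1` `]-oo, 0[) = 0%E.
Proof.
move=> hE; rewrite hE; last exact: measurable_itv.
rewrite /exponential_prob (eq_integral (fun=> 0%E)) ?integral0 // => x.
by rewrite inE /= in_itv /= => x_lt0; rewrite lt0_exponential_pdf.
Qed.

Lemma prob_gain_lt0 : exp_mean P h lam -> P [set w | g w < 0] = 0%E.
Proof.
move=> hE; apply: (subset_measure0 _ _ _ (exp_mean_prob_lt0 hE)).
- apply: (measurable_ltr_set (f := g) (g := cst 0)); first exact: measurable_gain.
  exact: measurable_cst.
- by rewrite -[X in measurable X]setTI; apply: mh => //; exact: measurable_itv.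
- move=> w /=; rewrite in_itv /=; apply: contraTT; rewrite -!leNgt => h_ge0.
  by rewrite /g /gain mulr_ge0 // powR_ge0.
Qed.

End gain.

Theorem theorem1 (d : measure_display) (T : measurableType d) (R : realType)
  (P : probability T R)
  (R1 R2 alpha lamGB lamGF PGB PGF sigma2 gam : R)
  (hGB hGF : T -> R) (zGB zGF : T -> R * R) (fGF : R -> R) :
  0 < R1 -> R1 < R2 -> 0 < alpha -> 0 < lamGB -> 0 < lamGF ->
  0 < PGB -> 0 < PGF -> 0 < sigma2 -> 0 < gam ->
  measurable_fun [set: T] hGB -> measurable_fun [set: T] hGF ->
  measurable_fun [set: T] zGB -> measurable_fun [set: T] zGF ->
  exp_mean P hGB lamGB -> exp_mean P hGF lamGF ->
  uniform_on P zGB (disc R1) (pi * R1 ^+ 2) ->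
  uniform_on P zGF (annulus R1 R2) (pi * (R2 ^+ 2 - R1 ^+ 2)) ->
  indep2 P hGB (fun w => dist0 (zGB w)) ->
  indep2 P hGF (fun w => dist0 (zGF w)) ->
  let gGB := fun w => gain alpha (hGB w) (dist0 (zGB w)) in
  let gGF := fun w => gain alpha (hGF w) (dist0 (zGF w)) in
  indep2 P gGB gGF ->
  is_density P gGF fGF ->
  let rhoGB := PGB / sigma2 in
  let rhoGF := PGF / sigma2 in
  let Fnear := cdfR P gGB in
  let Pout := P [set w | rhoGB * gGB w / (rhoGF * gGF w + 1) < gam /\
                         gGF w < PGB / PGF * gGB w] in
  (1 < gam ->
    Pout =
    (\int[lebesgue_measure]_(x in `[0%R, +oo[)
        (Fnear ((gam * rhoGF * x + gam) / rhoGB) * fGF x)%:E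
     - \int[lebesgue_measure]_(x in `[0%R, +oo[)
        (Fnear (rhoGF / rhoGB * x) * fGF x)%:E)%E) /\
  (gam <= 1 ->
    Pout =
    (\int[lebesgue_measure]_(x in dom_b gam rhoGF)
        (Fnear ((gam * rhoGF * x + gam) / rhoGB) * fGF x)%:E
     - \int[lebesgue_measure]_(x in dom_b gam rhoGF)
        (Fnear (rhoGF / rhoGB * x) * fGF x)%:E)%E).
Proof.
move=> _ _ _ _ _ PGB_gt0 PGF_gt0 sigma2_gt0 gam_gt0 mhGB mhGF mzGB mzGF _ expGF _ _ _ _.
move=> gGB gGF indep densGF rhoGB rhoGF Fnear Pout.
have rhoGB_gt0 : 0 < rhoGB by rewrite divr_gt0.
have rhoGF_gt0 : 0 < rhoGF by rewrite divr_gt0.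
have PoutE : Pout =
    (\int[lebesgue_measure]_(x in outage_domain rhoGF gam)
        (Fnear ((gam * rhoGF * x + gam) / rhoGB) * fGF x)%:E
     - \int[lebesgue_measure]_(x in outage_domain rhoGF gam)
        (Fnear (rhoGF / rhoGB * x) * fGF x)%:E)%E.
  rewrite /Pout (_ : PGB / PGF = rhoGB / rhoGF); last first.
    by rewrite /rhoGB /rhoGF; field; rewrite !gt_eqF.
  apply: (prob_outage (measurable_gain _ mhGF mzGF) (measurable_gain _ mhGB mzGB)
    indep densGF rhoGB_gt0 rhoGF_gt0 gam_gt0).
  exact: (prob_gain_lt0 _ mhGF mzGF expGF).
split => gam1; rewrite PoutE.
- by rewrite outage_domain_gt1.
- by rewrite outage_domain_le1.
Qed.
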